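(* Let $A,p$ be real numbers with $0<A<p$. Let $\rho:(0,\infty)\to(0,\infty)$ be increasing with $x\mapsto\rho(x)/x^A$ decreasing, and let $(a_n)_{n\ge1}$ be a decreasing sequence of nonnegative numbers such that $$\sum_{n\ge1}h(a_n)\le\sum_{n\ge1}h(1/\rho(n))$$ for every increasing function $h:[0,\infty)\to[0,\infty)$ with $h(0)=0$ for which $t\mapsto h(t^p)$ is convex. Then there is a constant $C(p,A)$ depending only on $p$ and $A$ such that $a_n\le C(p,A)/\rho(n)$ for all $n\ge1$. *)

From mathcomp Require Import all_boot all_order all_algebra.
From mathcomp Require Import all_classical all_reals all_analysis.
Set Implicit Arguments. Unset Strict Implicit. Unset Printing Implicit Defensive.
Import Order.TTheory GRing.Theory Num.Theory.
Local Open Scope ring_scope.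

Definition admissible_h (R : realType) (p : R) (h : R -> R) : Prop :=
  [/\ h 0 = 0,
      (forall x, 0 <= x -> 0 <= h x),
      (forall x y, 0 <= x -> x <= y -> h x <= h y) &
      (forall s t l, 0 <= s -> 0 <= t -> 0 <= l -> l <= 1 ->
         h ((l * s + (1 - l) * t) `^ p) <= l * h (s `^ p) + (1 - l) * h (t `^ p))].

Definition admissible_rho (R : realType) (A : R) (rho : R -> R) : Prop :=
  [/\ (forall x, 0 < x -> 0 < rho x),
      (forall x y, 0 < x -> x <= y -> rho x <= rho y) &
      (forall x y, 0 < x -> x <= y -> rho y / y `^ A <= rho x / x `^ A)].

Definition admissible_seq (R : realType) (a : nat -> R) : Prop :=
  (forall n, (1 <= n)%N -> 0 <= a n) /\ (forall n, (1 <= n)%N -> a n.+1 <= a n).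

From mathcomp Require Import all_boot all_order all_algebra.
From mathcomp Require Import all_classical all_reals all_analysis.
From mathcomp Require Import ring lra.
Import Order.TTheory GRing.Theory Num.Theory.
Local Open Scope ring_scope.

(* Put q := 1/p and al := A q, so that 0 < al < 1.  Fix n and
   test the hypothesis with the truncated root  h x := max (x^q - c, 0),  where
   c := rho(n)^(-q); h is admissible because t |-> h (t^p) = max (t - c, 0) is
   convex.
   - Since (a_k) decreases, the left-hand series is at least  n h(a_n).
   - Since rho increases, h(1/rho k) = 0 for k >= n, so the right-hand series
     is a finite sum over k < n.  There h(1/rho k) <= rho(k)^(-q), and since
     rho(x)/x^A decreases, rho(k)^(-q) <= c (n/k)^al.  A Bernoulli-type bound
     gives  sum_{k=1}^n k^(-al) <= n^(1-al)/(1-al),  so the right-hand side is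
     at most  c n / (1-al).
   Hence h(a_n) <= c/(1-al), i.e. a_n^q <= (1 + 1/(1-al)) c, and raising to the
   power p yields  a_n <= C / rho(n)  with  C := (1 + 1/(1-al))^p.
   The file first proves the real-analysis estimates (Bernoulli's inequality,
   the bound on sum k^(-al), the comparison for rho), then the facts about
   series of nonnegative terms, then the properties of the test function and
   the two bounds on the series it produces; the theorem combines them. *)

Section TruncatedRootTest.
Set Implicit Arguments. Unset Strict Implicit.
Context {R : realType}.

(* Bernoulli's inequality for exponents in (0,1), obtained from Young's
   inequality [conjugate_powR]. *)
Lemma powR_bernoulli (b x : R) :
  0 < b -> b < 1 -> 0 <= x -> x <= 1 -> (1 - x) `^ b <= 1 - b * x.
Proof.
move=> b0 b1 x0 x1.
have := @conjugate_powR R ((1 - x) `^ b) 1 b^-1 (1 - b)^-1 (powR_ge0 _ _) ler01.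
rewrite invr_gt0 b0 invr_gt0 subr_gt0 b1 !invrK => /(_ isT isT).
have -> : b + (1 - b) = 1 by ring.
move=> /(_ erefl); rewrite mulr1 -powRrM mulfV ?gt_eqF // powRr1 ?subr_ge0 //.
by rewrite powR1; lra.
Qed.

(* Integral-comparison bound  sum_{k=1}^N k^(-al) <= N^(1-al)/(1-al), by
   induction on N using Bernoulli's inequality for the increment. *)
Lemma sum_powR_neg_le (al : R) : 0 < al -> al < 1 ->
  forall N : nat, \sum_(1 <= k < N.+1) k%:R `^ (- al) <= N%:R `^ (1 - al) / (1 - al).
Proof.
move=> al0 al1; set b := 1 - al.
have b0 : 0 < b by rewrite /b; lra.
have b1 : b < 1 by rewrite /b; lra.
elim=> [|N IH]; first by rewrite big_geq // powR0 ?mul0r // gt_eqF.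
rewrite big_nat_recr //=; set M := N.+1%:R.
have M0 : 0 < M by rewrite ltr0Sn.
have MN : N%:R = M * (1 - M^-1).
  by rewrite mulrBr mulr1 mulfV ?gt_eqF // /M -natr1; ring.
have M_al : M `^ (- al) = M `^ b / M.
  have -> : - al = b + (-1) by rewrite /b; ring.
  rewrite powRD; last by apply/implyP => _; rewrite gt_eqF.
  by rewrite powRN powRr1 ?ltW.
have Mi0 : 0 <= M^-1 by rewrite invr_ge0 ltW.
have Mi1 : M^-1 <= 1 by rewrite invf_le1 // ler1n.
have step : N%:R `^ b <= M `^ b - b * (M `^ b / M).
  rewrite MN powRM ?(ltW M0) ?subr_ge0 //.
  have := ler_wpM2l (powR_ge0 M b) (powR_bernoulli b0 b1 Mi0 Mi1).
  by rewrite mulrBr mulr1 [M `^ b * (b / M)]mulrCA.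
rewrite M_al; apply: le_trans (lerD IH (lexx _)) _.
by rewrite ler_pdivlMr // mulrDl divfK ?gt_eqF // mulrC -lerBrDr.
Qed.

Lemma admissible_seq_le (a : nat -> R) : admissible_seq a ->
  forall k n, (1 <= k)%N -> (k <= n)%N -> a n <= a k.
Proof.
move=> [_ a_dec] k n k1 /subnK <-.
elim: (n - k)%N => [|d IH]; first by rewrite add0n.
by rewrite addSn; apply: le_trans (a_dec _ _) IH; rewrite (leq_trans k1) ?leq_addl.
Qed.

(* Since rho(x)/x^A decreases, 1/rho(x) <= (1/rho(y)) (y/x)^A for 0 < x <= y;
   we record the q-th power of this comparison. *)
Lemma rho_inv_powR_le (A q : R) (rho : R -> R) (x y : R) :
  admissible_rho A rho -> 0 <= q -> 0 < x -> x <= y ->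
  (rho x)^-1 `^ q <= (rho y)^-1 `^ q * y `^ (A * q) * x `^ (- (A * q)).
Proof.
move=> [rho0 _ rho_dec] q0 x0 xy; have y0 := lt_le_trans x0 xy.
have [rx0 ry0] := (rho0 _ x0, rho0 _ y0).
have [xA0 yA0] := (powR_gt0 A x0, powR_gt0 A y0).
have rx : (rho x)^-1 = (rho x / x `^ A)^-1 * x `^ (- A).
  by rewrite powRN; field; rewrite !gt_eqF.
have ry : (rho y)^-1 `^ q * y `^ (A * q) * x `^ (- (A * q)) =
    ((rho y / y `^ A)^-1 * x `^ (- A)) `^ q.
  rewrite powRM ?invr_ge0 ?divr_ge0 ?powR_ge0 ?ltW // invf_div.
  by rewrite powRM ?invr_ge0 ?powR_ge0 ?ltW // -!powRrM mulNr [X in X * _]mulrC.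
rewrite rx ry; apply: ge0_ler_powR => //; rewrite ?nnegrE.
- by rewrite mulr_ge0 ?invr_ge0 ?divr_ge0 ?powR_ge0 ?ltW.
- by rewrite mulr_ge0 ?invr_ge0 ?divr_ge0 ?powR_ge0 ?ltW.
by rewrite ler_wpM2r ?powR_ge0 // lef_pV2 ?posrE ?divr_gt0 // rho_dec.
Qed.

Lemma sum_rho_inv_powR_le (A q : R) (rho : R -> R) (n : nat) :
  admissible_rho A rho -> 0 <= q -> 0 < A * q -> A * q < 1 -> (1 <= n)%N ->
  \sum_(1 <= k < n) (rho k%:R)^-1 `^ q <= (rho n%:R)^-1 `^ q * n%:R / (1 - A * q).
Proof.
move=> rhoP q0 al0 al1 n1; set al := A * q; set c := (rho n%:R)^-1 `^ q.
apply: (@le_trans _ _ (\sum_(1 <= k < n) c * n%:R `^ al * k%:R `^ (- al))).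
  apply: ler_sum_nat => k /andP[k1 kn].
  by apply: rho_inv_powR_le; rewrite ?ltr0n ?ler_nat ?(ltnW kn).
have c_al : 0 <= c * n%:R `^ al by rewrite mulr_ge0 ?powR_ge0.
rewrite -mulr_sumr; apply: le_trans (ler_wpM2l c_al _) _.
  apply: le_trans (sum_powR_neg_le al0 al1 n).
  by rewrite big_nat_recr //= lerDl powR_ge0.
have n_pow : n%:R `^ al * n%:R `^ (1 - al) = n%:R.
  rewrite -powRD; last by apply/implyP => _; rewrite gt_eqF ?ltr0n.
  by rewrite addrC subrK powRr1 ?ler0n.
by rewrite -[in X in _ <= X]n_pow !mulrA lexx.
Qed.

Lemma partial_sum_le_nneseries (f : nat -> R) (m n : nat) :
  (forall k, (m <= k)%N -> 0 <= f k) ->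
  ((\sum_(m <= k < n) f k)%R%:E <= \sum_(m <= k <oo) (f k)%:E)%E.
Proof.
move=> f0; rewrite -sumEFin; apply: nneseries_lim_ge => k mk _.
by rewrite lee_fin f0.
Qed.

Lemma nneseries_finite_support (f : nat -> R) (m n : nat) :
  (m <= n)%N -> (forall k, (m <= k)%N -> 0 <= f k) ->
  (forall k, (n <= k)%N -> f k = 0) ->
  (\sum_(m <= k <oo) (f k)%:E = (\sum_(m <= k < n) f k)%R%:E)%E.
Proof.
move=> mn f0 f_tail.
rewrite (@nneseries_split R (fun k => (f k)%:E) m (n - m)); last first.
  by move=> k mk; rewrite lee_fin f0.
rewrite subnKC // eseries0 ?adde0 ?sumEFin // => k nk _.
by rewrite f_tail.
Qed.

Lemma nneseries_ge_decreasing (h : R -> R) (a : nat -> R) (n : nat) :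
  admissible_seq a -> (1 <= n)%N -> (forall x, 0 <= x -> 0 <= h x) ->
  (forall x y, 0 <= x -> x <= y -> h x <= h y) ->
  ((n%:R * h (a n))%:E <= \sum_(1 <= k <oo) (h (a k))%:E)%E.
Proof.
move=> aP n1 h0 h_homo; have [a0 _] := aP.
apply: le_trans (partial_sum_le_nneseries n.+1 (fun k k1 => h0 _ (a0 k k1))).
rewrite lee_fin; apply: le_trans (_ : \sum_(1 <= k < n.+1) h (a n) <= _).
  by rewrite sumr_const_nat subn1 mulr_natl.
apply: ler_sum_nat => k /andP[k1 kn]; apply: h_homo; first exact: a0 n n1.
exact: admissible_seq_le.
Qed.

Definition trunc_root (q c x : R) : R := Num.max (x `^ q - c) 0.

Lemma trunc_root_ge0 (q c x : R) : 0 <= trunc_root q c x.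
Proof. by rewrite /trunc_root le_max lexx orbT. Qed.

Lemma trunc_root_le_powR (q c x : R) :
  0 <= c -> trunc_root q c x <= x `^ q.
Proof. by move=> c0; rewrite /trunc_root ge_max powR_ge0 andbT lerBlDr lerDl. Qed.

Lemma trunc_root_homo (q c x y : R) :
  0 <= q -> 0 <= x -> x <= y -> trunc_root q c x <= trunc_root q c y.
Proof.
move=> q0 x0 xy; rewrite /trunc_root ge_max !le_max lexx !orbT andbT.
by apply/orP; left; rewrite lerD2r ge0_ler_powR // ?nnegrE // (le_trans x0 xy).
Qed.

Lemma trunc_root_eq0 (q c x : R) :
  x `^ q <= c -> trunc_root q c x = 0.
Proof. by move=> xc; rewrite /trunc_root max_r // subr_le0. Qed.

(* For c >= 0 the truncated root of order 1/p is an admissible test function: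
   t |-> h (t^p) = max (t - c, 0) is convex on [0, oo). *)
Lemma admissible_trunc_root (p c : R) :
  0 < p -> 0 <= c -> admissible_h p (trunc_root p^-1 c).
Proof.
move=> p0 c0; have q0 : 0 <= p^-1 by rewrite invr_ge0 ltW.
have root_pow v : 0 <= v -> (v `^ p) `^ p^-1 = v.
  by move=> v0; rewrite -powRrM mulfV ?gt_eqF // powRr1.
split=> [||x y x0 xy|s t l s0 t0 l0 l1].
- by rewrite trunc_root_eq0 // powR0 ?invr_eq0 ?gt_eqF.
- by move=> x _; apply: trunc_root_ge0.
- exact: trunc_root_homo.
have l1' : 0 <= 1 - l by rewrite subr_ge0.
rewrite /trunc_root !root_pow ?addr_ge0 ?mulr_ge0 //.
rewrite ge_max addr_ge0 ?mulr_ge0 ?le_max ?lexx ?orbT // andbT.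
have -> : l * s + (1 - l) * t - c = l * (s - c) + (1 - l) * (t - c) by ring.
by rewrite lerD // ler_wpM2l // le_max lexx.
Qed.

Lemma trunc_root_le_inv (p c M x : R) :
  0 < p -> 0 <= c -> 0 <= M -> 0 <= x ->
  trunc_root p^-1 c x <= c * M -> x <= (1 + M) `^ p * c `^ p.
Proof.
move=> p0 c0 M0 x0 hx.
have xq : x `^ p^-1 <= c * (1 + M).
  have : x `^ p^-1 - c <= c * M by apply: le_trans hx; rewrite /trunc_root le_max lexx.
  by rewrite lerBlDr mulrDr mulr1 addrC.
have -> : x = (x `^ p^-1) `^ p by rewrite -powRrM mulVf ?gt_eqF // powRr1.
rewrite -powRM ?addr_ge0 // mulrC.
apply: ge0_ler_powR xq; rewrite ?nnegrE ?powR_ge0 ?mulr_ge0 ?addr_ge0 //.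
exact: ltW.
Qed.

(* Upper bound for the right-hand series tested against the truncated root at
   level c = rho(n)^(-q): the terms vanish for k >= n, and the remaining ones
   are bounded by [sum_rho_inv_powR_le]. *)
Lemma trunc_root_rho_series_le (A q : R) (rho : R -> R) (n : nat) :
  admissible_rho A rho -> 0 <= q -> 0 < A * q -> A * q < 1 -> (1 <= n)%N ->
  (\sum_(1 <= k <oo) (trunc_root q ((rho n%:R)^-1 `^ q) (rho k%:R)^-1)%:E <=
   ((rho n%:R)^-1 `^ q * n%:R / (1 - A * q))%:E)%E.
Proof.
move=> rhoP q0 al0 al1 n1; set c := (rho n%:R)^-1 `^ q; have [rho0 rho_inc _] := rhoP.
have rho_k k : (1 <= k)%N -> 0 < rho k%:R by move=> k1; rewrite rho0 ?ltr0n.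
have inv_rho_ge0 k : (1 <= k)%N -> 0 <= (rho k%:R)^-1.
  by move=> k1; rewrite invr_ge0 ltW ?rho_k.
rewrite (@nneseries_finite_support _ _ n) // => [|k _|k nk].
- rewrite lee_fin; apply: le_trans (sum_rho_inv_powR_le rhoP q0 al0 al1 n1).
  by apply: ler_sum_nat => k _; apply: trunc_root_le_powR; rewrite powR_ge0.
- exact: trunc_root_ge0.
have k1 := leq_trans n1 nk.
apply: trunc_root_eq0; apply: ge0_ler_powR => //; rewrite ?nnegrE ?inv_rho_ge0 //.
by rewrite lef_pV2 ?posrE ?rho_k // rho_inc ?ltr0n ?ler_nat.
Qed.

End TruncatedRootTest.

Theorem lemma2p2 (R : realType) (A p : R) (hA : 0 < A) (hAp : A < p) :
  exists C : R, forall (rho : R -> R) (a : nat -> R),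
    admissible_rho A rho ->
    admissible_seq a ->
    (forall h : R -> R, admissible_h p h ->
       (\sum_(1 <= n <oo) ((h (a n))%:E) <=
        \sum_(1 <= n <oo) ((h (rho n%:R)^-1)%:E))%E) ->
    forall n : nat, (1 <= n)%N -> a n <= C / rho n%:R.
Proof.
have p0 : 0 < p := lt_trans hA hAp.
have q0 : 0 <= p^-1 by rewrite invr_ge0 ltW.
have al0 : 0 < A * p^-1 by rewrite mulr_gt0 ?invr_gt0.
have al1 : A * p^-1 < 1 by rewrite ltr_pdivrMr // mul1r.
set M := (1 - A * p^-1)^-1; have M0 : 0 <= M by rewrite invr_ge0 subr_ge0 ltW.
exists ((1 + M) `^ p) => rho a rhoP aP hyp n n1.
have rho_n : 0 < rho n%:R by case: rhoP => rho0 _ _; rewrite rho0 ?ltr0n.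
set c := (rho n%:R)^-1 `^ p^-1; have c0 : 0 <= c := powR_ge0 _ _.
have [_ h_ge0 h_homo _] := admissible_trunc_root p0 c0.
have h_an : trunc_root p^-1 c (a n) <= c * M.
  have := le_trans (nneseries_ge_decreasing aP n1 h_ge0 h_homo)
    (le_trans (hyp _ (admissible_trunc_root p0 c0))
              (trunc_root_rho_series_le rhoP q0 al0 al1 n1)).
  by rewrite lee_fin -/c -/M [c * n%:R]mulrC -mulrA ler_pM2l ?ltr0n.
have c_p : c `^ p = (rho n%:R)^-1.
  by rewrite /c -powRrM mulVf ?gt_eqF // powRr1 // invr_ge0 ltW.
rewrite -c_p; apply: trunc_root_le_inv h_an => //.
by case: aP => + _; apply.
Qed.
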